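(* Assume $\|\nabla f_t(x)\|_\infty\le G_\infty$ for all $t\in[n]$, $x\in\mathcal D$, where $\min\{G,G_\infty,B\}\ge1$ and $\alpha>0$. Let $\phi=\sqrt{70(8G^2B^2\alpha+G^2B^2+1/\alpha)}$, $C_n>0$, and assume $\lambda\ge d^{1.5}\phi\,n^{1/3}/C_n^{1/3}$. Let $[i_s,i_t]\in\mathcal P$ be a bin of the key partition such that, across some coordinate $k\in[d]$, the offline optimal takes the form of Structure 1 or Structure 2 on some sub-interval of $[i_s,i_t]$. Let $$\mu_{\mathrm{th}}=\sqrt{\frac{140d^{1.5}(8G^2B^2\alpha+G^2B^2+1/\alpha)G_\infty C_n^{1/3}\log n}{G^2\phi\,n^{1/3}}}.$$ If $C_n\le\left(\frac{B^2G^2\phi}{560d^{1.5}(8G^2B^2\alpha+G^2B^2+1/\alpha)G_\infty\log n}\right)^3n$, then $\mathrm{GAP}_{\min}(-B,[i_s,i_t])[k]\vee\mathrm{GAP}_{\min}(B,[i_s,i_t])[k]\ge\mu_{\mathrm{th}}$.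
   Context: $\mathcal D=\{x\in\mathbb R^d:\|x\|_\infty\le B\}$; $[a,b]=\{a,\dots,b\}$; $a\vee b=\max\{a,b\}$; $G>0$; $f_1,\dots,f_n$ are differentiable convex functions on $\mathcal D$ (the surrogate losses $f_t(x)=(\sqrt{\alpha/2}\nabla\ell_t(x_t)^T(x-x_t)+1/\sqrt{2\alpha})^2$). Offline optimal: given $C_n>0$, $u_1,\dots,u_n\in\mathbb R^d$ is an optimal solution of: minimize $\sum_{t=1}^nf_t(\tilde u_t)$ subject to $\sum_{t=2}^n\|\tilde u_t-\tilde u_{t-1}\|_1\le C_n$ and $\|\tilde u_t\|_\infty\le B$; $\lambda\ge0$ and $\gamma^\pm_t\in\mathbb R^d_{\ge0}$ are optimal dual variables satisfying: there are $s_t\in[-1,1]^d$ with $s_t[k]=\mathrm{sign}(u_{t+1}[k]-u_t[k])$ whenever nonzero, $s_0=s_n=0$, $\nabla f_t(u_t)=\lambda(s_t-s_{t-1})+\gamma^-_t-\gamma^+_t$, $\lambda(\sum_{t=2}^n\|u_t-u_{t-1}\|_1-C_n)=0$, $\gamma^-_t[k](u_t[k]+B)=0$, $\gamma^+_t[k](u_t[k]-B)=0$. Structure 1 across coordinate $k$ on $[a,b]\subseteq\{2,\dots,n-1\}$: $u_j[k]=u_a[k]\in(-B,B)$ for all $j\in[a,b]$, $u_b[k]>u_{b+1}[k]$ and $u_a[k]>u_{a-1}[k]$. Structure 2: same but with $u_b[k]<u_{b+1}[k]$ and $u_a[k]<u_{a-1}[k]$. $\mathrm{GAP}_{\min}(\beta,[a,b])[k]=\min_{j\in[a,b]}|u_j[k]-\beta|$.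 Key partition $\mathcal P$: $[n]$ is partitioned greedily into consecutive bins: the first bin starts at $i_s=1$; a bin starting at $i_s$ ends at the largest $i_t\in[i_s,n]$ with $\sum_{j=i_s+1}^{i_t}\|u_j-u_{j-1}\|_1\le B/\sqrt{i_t-i_s+1}$; the next bin starts at $i_t+1$, until $n$ is covered. *)

From HB Require Import structures.
From mathcomp Require Import all_boot all_order all_algebra.
From mathcomp Require Import all_classical all_reals all_analysis.
Set Implicit Arguments. Unset Strict Implicit. Unset Printing Implicit Defensive.
Import Order.TTheory GRing.Theory Num.Theory.
Import numFieldNormedType.Exports.
Local Open Scope ring_scope.

Section Defs.
Variables (R : realType) (d : nat).
Notation vec := 'rV[R]_d.

Definition ent (v : vec) (k : 'I_d) : R := v ord0 k.

Definition dotv (v w : vec) : R := \sum_(k < d) ent v k * ent w k.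
Definition norm1 (v : vec) : R := \sum_(k < d) `|ent v k|.
Definition norm2 (v : vec) : R := Num.sqrt (\sum_(k < d) ent v k ^+ 2).

Definition inD (B : R) (x : vec) : Prop := forall k, `|ent x k| <= B.

(* surrogate loss f_t(x) = (sqrt(alpha/2) g_t^T (x - x_t) + 1/sqrt(2 alpha))^2,
   where g_t = grad l_t(x_t) *)
Definition surrogate (alpha : R) (g xt : vec) (x : vec) : R :=
  (Num.sqrt (alpha / 2) * dotv g (x - xt) + (Num.sqrt (2 * alpha))^-1) ^+ 2.

Definition gradk (F : vec -> R) (x : vec) (k : 'I_d) : R :=
  'D_(delta_mx ord0 k) F x.

Definition TV (u : nat -> vec) (a b : nat) : R :=
  \sum_(a.+1 <= t < b.+1) norm1 (u t - u t.-1).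

Definition bin_end (u : nat -> vec) (B : R) (n i : nat) : nat :=
  \max_(i <= j < n.+1 | TV u i j <= B / Num.sqrt ((j - i + 1)%N%:R)) j.

Inductive key_bin (u : nat -> vec) (B : R) (n : nat) : nat -> nat -> Prop :=
| key_bin_first : (1 <= n)%N -> key_bin u B n 1 (bin_end u B n 1)
| key_bin_next : forall i j, key_bin u B n i j -> (j < n)%N ->
    key_bin u B n j.+1 (bin_end u B n j.+1).

Definition structure1 (u : nat -> vec) (B : R) (n : nat) (k : 'I_d) (a b : nat) : Prop :=
  [/\ (2 <= a <= b)%N /\ (b <= n.-1)%N,
      (forall j, (a <= j <= b)%N -> ent (u j) k = ent (u a) k),
      - B < ent (u a) k < B,
      ent (u b) k > ent (u b.+1) k &
      ent (u a) k > ent (u a.-1) k].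

Definition structure2 (u : nat -> vec) (B : R) (n : nat) (k : 'I_d) (a b : nat) : Prop :=
  [/\ (2 <= a <= b)%N /\ (b <= n.-1)%N,
      (forall j, (a <= j <= b)%N -> ent (u j) k = ent (u a) k),
      - B < ent (u a) k < B,
      ent (u b) k < ent (u b.+1) k &
      ent (u a) k < ent (u a.-1) k].

Definition GAPmin (u : nat -> vec) (beta : R) (a b : nat) (k : 'I_d) : R :=
  \big[Order.min/`|ent (u a) k - beta|]_(a <= j < b.+1) `|ent (u j) k - beta|.

End Defs.

From HB Require Import structures.
From mathcomp Require Import all_boot all_order all_algebra.
From mathcomp Require Import all_classical all_reals all_analysis.
From mathcomp Require Import ring lra.
Import Order.TTheory GRing.Theory Num.Theory.
Import numFieldNormedType.Exports.
Local Open Scope ring_scope.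

(* Inside a bin [i, j] of the key partition the path length is at most
   B / sqrt (j - i + 1) <= B, so the k-th coordinate of the offline optimum
   oscillates by at most B there and cannot come closer than B / 2 to both -B
   and B.  The budget condition on C_n is exactly mu_th <= B / 2: writing
   mu_th^2 = c C_n^(1/3) / n^(1/3), it says C_n^(1/3) <= B^2 n^(1/3) / (4 c). *)

Lemma big_selective {T : Type} (op : T -> T -> T) (idx : T) {I : eqType}
    (r : seq I) (P : pred I) (F : I -> T) :
  (forall x y, op x y = x \/ op x y = y) ->
  \big[op/idx]_(i <- r | P i) F i = idx \/
  exists2 i, (i \in r) && P i & \big[op/idx]_(i <- r | P i) F i = F i.
Proof.
move=> op_sel; rewrite big_seq_cond; elim/big_ind: _ => [|x y hx hy|i hi].
- by left.
- by case: (op_sel x y) => ->.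
- by right; exists i.
Qed.

Section TotalVariation.
Context {R : realType} {d : nat}.
Variable u : nat -> 'rV[R]_d.

Lemma entB (v w : 'rV[R]_d) k : ent (v - w) k = ent v k - ent w k.
Proof. by rewrite /ent !mxE. Qed.

Lemma norm1_ge0 (v : 'rV[R]_d) : 0 <= norm1 v.
Proof. exact: sumr_ge0. Qed.

Lemma ent_le_norm1 (v : 'rV[R]_d) k : `|ent v k| <= norm1 v.
Proof. by rewrite /norm1 (bigD1 k) //= lerDl sumr_ge0. Qed.

Lemma TV_ge0 a b : 0 <= TV u a b.
Proof. by apply: sumr_ge0 => t _; apply: norm1_ge0. Qed.

Lemma TV_cat a m b : (a <= m <= b)%N -> TV u a b = TV u a m + TV u m b.
Proof. by case/andP=> am mb; rewrite /TV -big_cat_nat. Qed.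

Lemma dist_le_TV k a b : (a <= b)%N ->
  `|ent (u b) k - ent (u a) k| <= TV u a b.
Proof.
elim: b => [|b IH]; first by rewrite leqn0 => /eqP ->; rewrite subrr normr0 TV_ge0.
rewrite leq_eqVlt => /orP[/eqP ->|ab]; first by rewrite subrr normr0 TV_ge0.
rewrite ltnS in ab; rewrite (@TV_cat a b) ?ab ?leqnSn //.
have -> : ent (u b.+1) k - ent (u a) k =
    (ent (u b) k - ent (u a) k) + (ent (u b.+1) k - ent (u b) k).
  by rewrite [RHS]addrC addrA subrK.
apply: le_trans (ler_normD _ _) _; rewrite lerD ?IH //.
by rewrite /TV big_nat1 -entB ent_le_norm1.
Qed.

Lemma dist_le_TV_in k a b j1 j2 : (a <= j1 <= b)%N -> (a <= j2 <= b)%N ->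
  `|ent (u j2) k - ent (u j1) k| <= TV u a b.
Proof.
wlog j12 : j1 j2 / (j1 <= j2)%N => [wlog_j12|].
  by case: (leqP j1 j2) => [|/ltnW] j12 h1 h2; [|rewrite distrC]; apply: wlog_j12.
case/andP=> aj1 j1b /andP[_ j2b].
rewrite (@TV_cat a j1) ?aj1 ?(leq_trans j12) // (@TV_cat j1 j2) ?j12 //.
rewrite addrCA; apply: le_trans (dist_le_TV k _ _ j12) _.
by rewrite lerDl addr_ge0 ?TV_ge0.
Qed.

End TotalVariation.

Section KeyPartition.
Context {R : realType} {d : nat} {u : nat -> 'rV[R]_d} {B : R} {n : nat}.
Hypothesis B_ge0 : 0 <= B.

Let bin_cond i j := TV u i j <= B / Num.sqrt ((j - i + 1)%N%:R).

Lemma bin_end_ge i : (i <= n)%N -> (i <= bin_end u B n i)%N.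
Proof.
move=> i_le_n; apply: (@leq_bigmax_seq _ _ (bin_cond i)).
  by rewrite mem_index_iota leqnn ltnS.
by rewrite /bin_cond /TV big_geq // subnn sqrtr1 divr1.
Qed.

Lemma TV_bin_end_le i : (0 < i <= n)%N -> TV u i (bin_end u B n i) <= B.
Proof.
case/andP=> i_gt0 i_le_n; have := bin_end_ge _ i_le_n.
rewrite /bin_end; case: (big_selective maxn 0%N (index_iota i n.+1) (bin_cond i) id).
- by move=> x y; rewrite /maxn; case: ltnP; [right|left].
- by move=> ->; rewrite leqn0 => /eqP i0; rewrite i0 in i_gt0.
case=> j /andP[_ cond_j] -> _; apply: le_trans cond_j _.
have sqrt_ge1 : 1 <= Num.sqrt ((j - i + 1)%N%:R : R).
  by rewrite -{1}sqrtr1 ler_sqrt // ler1n addn1.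
by rewrite ler_pdivrMr ?(lt_le_trans ltr01) // ler_peMr.
Qed.

Lemma key_bin_bin_end i j : key_bin u B n i j -> (0 < i <= n)%N /\ j = bin_end u B n i.
Proof. by case=> [n_gt0|i' j' _ j'n]; split; rewrite ?leqnn. Qed.

Lemma key_bin_dist_le i j k : key_bin u B n i j -> forall j1 j2,
  (i <= j1 <= j)%N -> (i <= j2 <= j)%N -> `|ent (u j2) k - ent (u j1) k| <= B.
Proof.
case/key_bin_bin_end=> bin_i ->{j} j1 j2 hj1 hj2.
exact: le_trans (dist_le_TV_in u k _ _ _ _ hj1 hj2) (TV_bin_end_le _ bin_i).
Qed.

End KeyPartition.

Section Gaps.
Context {R : realType} {d : nat}.
Variables (u : nat -> 'rV[R]_d) (k : 'I_d).

Lemma GAPmin_attained beta a b : (a <= b)%N ->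
  exists2 j, (a <= j <= b)%N & GAPmin u beta a b k = `|ent (u j) k - beta|.
Proof.
move=> ab; rewrite /GAPmin.
case: (big_selective Order.min `|ent (u a) k - beta| (index_iota a b.+1) xpredT
         (fun j => `|ent (u j) k - beta|)).
- by move=> x y; rewrite minEle; case: ifP; [left|right].
- by move=> ->; exists a; rewrite ?leqnn.
- by case=> j; rewrite andbT mem_index_iota ltnS => aj ->; exists j.
Qed.

Lemma GAPmin_max_ge_half (B : R) a b : (a <= b)%N ->
  (forall j1 j2, (a <= j1 <= b)%N -> (a <= j2 <= b)%N ->
     `|ent (u j2) k - ent (u j1) k| <= B) ->
  B / 2 <= Num.max (GAPmin u (- B) a b k) (GAPmin u B a b k).
Proof.
move=> ab osc_le.
have [j1 hj1 ->] := GAPmin_attained (- B) _ _ ab.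
have [j2 hj2 ->] := GAPmin_attained B _ _ ab.
have := osc_le _ _ hj1 hj2; rewrite ler_norml => /andP[_ osc].
have := ler_norm (ent (u j1) k - - B); have := ler_norm (B - ent (u j2) k).
rewrite distrC le_max => n1 n2.
by case: (leP (B / 2) `|ent (u j1) k - - B|) => h; apply/orP; [left|right]; lra.
Qed.

End Gaps.

Section Threshold.
Context {R : realType}.

Lemma sqrt_ratio_le_half (c x m B : R) : 0 <= c -> 0 <= m -> 0 <= B ->
  x <= B ^+ 2 / (4 * c) * m -> Num.sqrt (c * x / m) <= B / 2.
Proof.
move=> c_ge0 m_ge0 B_ge0 x_le.
rewrite -[B / 2]ger0_norm ?divr_ge0 // -sqrtr_sqr ler_sqrt ?sqr_ge0 //.
move: c_ge0; rewrite le_eqVlt => /predU1P[<-|c_gt0]; first by rewrite !mul0r sqr_ge0.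
move: m_ge0; rewrite le_eqVlt => /predU1P[<-|m_gt0]; first by rewrite invr0 mulr0 sqr_ge0.
rewrite ler_pdivrMr //; apply: le_trans (ler_wpM2l (ltW c_gt0) x_le) _.
suff -> : c * (B ^+ 2 / (4 * c) * m) = (B / 2) ^+ 2 * m by [].
by field; rewrite gt_eqF.
Qed.

Lemma powR_inv_le {p : nat} {C X N : R} : (0 < p)%N -> 0 <= C -> 0 <= X -> 0 <= N ->
  C <= X ^+ p * N -> C `^ p%:R^-1 <= X * N `^ p%:R^-1.
Proof.
move=> p_gt0 C_ge0 X_ge0 N_ge0 C_le.
have -> : X * N `^ p%:R^-1 = (X ^+ p * N) `^ p%:R^-1.
  rewrite powRM ?exprn_ge0 // -powR_mulrn // -powRrM mulfV ?powRr1 //.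
  by rewrite pnatr_eq0 -lt0n.
by apply: ge0_ler_powR; rewrite ?invr_ge0 ?nnegrE ?mulr_ge0 ?exprn_ge0.
Qed.

Lemma budget_threshold_le_half (A K Ginf L G phi Cn N B : R) :
  0 <= A -> 0 <= K -> 0 <= Ginf -> 0 <= L -> 0 <= phi ->
  0 <= Cn -> 0 <= N -> 0 <= B ->
  Cn <= (B ^+ 2 * G ^+ 2 * phi / (560 * A * K * Ginf * L)) ^+ 3 * N ->
  Num.sqrt (140 * A * K * Ginf * Cn `^ 3^-1 * L / (G ^+ 2 * phi * N `^ 3^-1))
  <= B / 2.
Proof.
move=> A_ge0 K_ge0 Ginf_ge0 L_ge0 phi_ge0 Cn_ge0 N_ge0 B_ge0 Cn_le.
set c := 140 * A * K * Ginf * L / (G ^+ 2 * phi).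
have c_ge0 : 0 <= c by rewrite /c divr_ge0 ?(mulr_ge0 (sqr_ge0 G)) ?mulr_ge0.
have -> : 140 * A * K * Ginf * Cn `^ 3^-1 * L / (G ^+ 2 * phi * N `^ 3^-1)
    = c * Cn `^ 3^-1 / N `^ 3^-1 by rewrite /c invfM; ring.
apply: sqrt_ratio_le_half; rewrite ?powR_ge0 //.
have X_ge0 : 0 <= B ^+ 2 / (4 * c) by rewrite divr_ge0 ?exprn_ge0 ?(mulr_ge0 _ c_ge0).
apply: (powR_inv_le (p := 3)) => //.
suff -> : B ^+ 2 / (4 * c) = B ^+ 2 * G ^+ 2 * phi / (560 * A * K * Ginf * L) by [].
have -> : 560 = 4 * 140 :> R by lra.
by rewrite /c !invfM !invrK; ring.
Qed.

End Threshold.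

Theorem mainTheorem16 (R : realType) (d n : nat) (B G Ginf alpha Cn lam : R)
  (g xs u s gm gp : nat -> 'rV[R]_d)
  (hG : 1 <= G) (hGinf : 1 <= Ginf) (hB : 1 <= B) (halpha : 0 < alpha)
  (hCn : 0 < Cn)
  (hxs : forall t, (1 <= t <= n)%N -> inD B (xs t))
  (hg : forall t, (1 <= t <= n)%N -> norm2 (g t) <= G)
  (hGrad : forall t, (1 <= t <= n)%N -> forall x, inD B x -> forall k,
      `|gradk (surrogate alpha (g t) (xs t)) x k| <= Ginf)
  (hfeasTV : TV u 1 n <= Cn)
  (hfeasD : forall t, (1 <= t <= n)%N -> inD B (u t))
  (hopt : forall v : nat -> 'rV[R]_d, TV v 1 n <= Cn ->
      (forall t, (1 <= t <= n)%N -> inD B (v t)) ->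
      \sum_(1 <= t < n.+1) surrogate alpha (g t) (xs t) (u t)
      <= \sum_(1 <= t < n.+1) surrogate alpha (g t) (xs t) (v t))
  (hlam0 : 0 <= lam)
  (hgm0 : forall t k, (1 <= t <= n)%N -> 0 <= ent (gm t) k)
  (hgp0 : forall t k, (1 <= t <= n)%N -> 0 <= ent (gp t) k)
  (hs_range : forall t k, (t <= n)%N -> -1 <= ent (s t) k <= 1)
  (hs_sign : forall t k, (1 <= t < n)%N ->
      ent (u t.+1) k - ent (u t) k != 0 ->
      ent (s t) k = Num.sg (ent (u t.+1) k - ent (u t) k))
  (hs0 : s 0%N = 0) (hsn : s n = 0)
  (hstat : forall t k, (1 <= t <= n)%N ->
      gradk (surrogate alpha (g t) (xs t)) (u t) k
      = lam * (ent (s t) k - ent (s t.-1) k) + ent (gm t) k - ent (gp t) k)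
  (hcs_lam : lam * (TV u 1 n - Cn) = 0)
  (hcs_gm : forall t k, (1 <= t <= n)%N -> ent (gm t) k * (ent (u t) k + B) = 0)
  (hcs_gp : forall t k, (1 <= t <= n)%N -> ent (gp t) k * (ent (u t) k - B) = 0)
  (hlam : let K := 8 * G ^+ 2 * B ^+ 2 * alpha + G ^+ 2 * B ^+ 2 + alpha^-1 in
          let phi := Num.sqrt (70 * K) in
          lam >= (d%:R `^ (3 / 2)) * phi * (n%:R `^ (3^-1)) / (Cn `^ (3^-1)))
  (i_s i_t : nat) (hbin : key_bin u B n i_s i_t)
  (k : 'I_d) (a b : nat) (hab : (i_s <= a)%N /\ (b <= i_t)%N)
  (hstruct : structure1 u B n k a b \/ structure2 u B n k a b)
  (hCnsmall : let K := 8 * G ^+ 2 * B ^+ 2 * alpha + G ^+ 2 * B ^+ 2 + alpha^-1 in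
          let phi := Num.sqrt (70 * K) in
          Cn <= ((B ^+ 2 * G ^+ 2 * phi)
                 / (560 * (d%:R `^ (3 / 2)) * K * Ginf * ln n%:R)) ^+ 3 * n%:R) :
  let K := 8 * G ^+ 2 * B ^+ 2 * alpha + G ^+ 2 * B ^+ 2 + alpha^-1 in
  let phi := Num.sqrt (70 * K) in
  let mu_th := Num.sqrt ((140 * (d%:R `^ (3 / 2)) * K * Ginf * (Cn `^ (3^-1)) * ln n%:R)
                         / (G ^+ 2 * phi * (n%:R `^ (3^-1)))) in
  Num.max (GAPmin u (- B) i_s i_t k) (GAPmin u B i_s i_t k) >= mu_th.
Proof.
cbv zeta in hCnsmall |- *.
set K := 8 * G ^+ 2 * B ^+ 2 * alpha + G ^+ 2 * B ^+ 2 + alpha^-1 in hCnsmall *.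
set phi := Num.sqrt (70 * K) in hCnsmall *.
have B_ge0 : 0 <= B by lra.
have [/andP[i_s_gt0 i_s_le_n] i_t_end] := key_bin_bin_end _ _ hbin.
have i_s_le_i_t : (i_s <= i_t)%N by rewrite i_t_end bin_end_ge.
apply: le_trans (GAPmin_max_ge_half u k B _ _ i_s_le_i_t (key_bin_dist_le B_ge0 _ _ k hbin)).
have n_gt0 : (0 < n)%N := leq_trans i_s_gt0 i_s_le_n.
have [G_ge0 Ginf_ge0 alpha_ge0] : [/\ 0 <= G, 0 <= Ginf & 0 <= alpha] by split; lra.
have K_ge0 : 0 <= K by rewrite /K !addr_ge0 ?invr_ge0 ?mulr_ge0 ?exprn_ge0.
apply: budget_threshold_le_half; rewrite ?powR_ge0 ?sqrtr_ge0 ?ln_ge0 ?ler1n ?ler0n //.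
exact: ltW.
Qed.
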